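(* Let $G$ be a modification order graph (mo-graph) and let $C_0 \xrightarrow{mo} C_1 \xrightarrow{mo} \cdots \xrightarrow{mo} C_n$ be a path in $G$ such that $CV_{C_0} \le CV_{C_1} \le \cdots \le CV_{C_n}$. If any new edge is added to $G$ using the procedures Merge, AddEdge and AddRMWEdge, then the updated clock vectors satisfy $CV'_{C_0} \le CV'_{C_1} \le \cdots \le CV'_{C_n}$, where $CV'_{C_i} := CV_{C_i}$ whenever $CV_{C_i}$ is not changed by the addition.
   Context: An execution is a sequence of events performed by threads. Each event $E$ has a thread id $t_E$ and a unique sequence number $s_E$ taken from a global counter that is incremented by one at every event, so sequence numbers strictly increase along the execution. A clock vector is a function from thread ids to natural numbers, with $(CV_1 \cup CV_2)(t) = \max(CV_1(t), CV_2(t))$ and $CV_1 \le CV_2$ iff $CV_1(t) \le CV_2(t)$ for all $t$. The mo-graph has one node for each atomic store or atomic read-modify-write (RMW) executed so far. Edges only connect nodes accessing the same memory location. Each node $X$ stores a thread id $X.tid$, a set $X.edges$ of successor nodes (its outgoing mo edges), a field $X.rmw$ (a node or null; an rmw edge from $X$ to $X.rmw$ indicates that RMW $X.rmw$ reads from $X$), and a clock vector $X.cv$, also written $CV_X$. When the node for a store $A$ is created, its clock vector is $\perp_{CV_A} = \lambda t.\ (s_A \text{ if } t = t_A \text{ else } 0)$. Edges are added only by the following procedures. Merge(dst, src): if $src.cv \le dst.cv$ return false; otherwise set $dst.cv := dst.cv \cup src.cv$ and return true. AddEdge(from, to): let mustAdd be true iff ($from.rmw = to$ or $from.tid = to.tid$).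 If $from.cv \le to.cv$ and not mustAdd, return. While $from.rmw \ne$ null: let $next := from.rmw$; if $next = to$ stop the loop; otherwise $from := next$. Add $to$ to $from.edges$. If Merge(to, from) returns true, then let $Q := \{to\}$ and while $Q$ is nonempty remove a node $node$ from $Q$ and for each $dst \in node.edges$, if Merge(dst, node) returns true add $dst$ to $Q$. AddRMWEdge(from, rmw): set $from.rmw := rmw$; for each $dst \in from.edges$ with $dst \ne rmw$ add $dst$ to $rmw.edges$; set $from.edges := \emptyset$; call AddEdge(from, rmw). A path $X \xrightarrow{mo} Y$ means $Y \in X.edges$. *)

From mathcomp Require Import all_boot.
Set Implicit Arguments. Unset Strict Implicit. Unset Printing Implicit Defensive.

Definition cvec := nat -> nat.
Definition cv_join (a b : cvec) : cvec := fun t => maxn (a t) (b t).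
Definition cv_le (a b : cvec) : Prop := forall t, a t <= b t.

(* The state of the mo-graph: for each node X, X.tid, X.edges, X.rmw, X.cv.
   Edge sets are finite sets represented by sequences (membership only). *)
Record mograph := MoGraph {
  g_tid   : nat -> nat;
  g_edges : nat -> seq nat;
  g_rmw   : nat -> option nat;
  g_cv    : nat -> cvec }.

Definition upd {T} (f : nat -> T) (x : nat) (v : T) : nat -> T :=
  fun y => if y == x then v else f y.

Definition set_cv (G : mograph) x c :=
  MoGraph (g_tid G) (g_edges G) (g_rmw G) (upd (g_cv G) x c).
Definition set_edges (G : mograph) x s :=
  MoGraph (g_tid G) (upd (g_edges G) x s) (g_rmw G) (g_cv G).
Definition set_rmw (G : mograph) x r :=
  MoGraph (g_tid G) (g_edges G) (upd (g_rmw G) x r) (g_cv G).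

Definition sadd (x : nat) (s : seq nat) := if x \in s then s else x :: s.
Definition sdel (x : nat) (s : seq nat) := [seq y <- s | y != x].

(* Merge(dst, src): G' is the new state, b the returned boolean. *)
Inductive merge (G : mograph) (dst src : nat) : mograph -> bool -> Prop :=
| merge_no : cv_le (g_cv G src) (g_cv G dst) -> merge G dst src G false
| merge_yes : ~ cv_le (g_cv G src) (g_cv G dst) ->
    merge G dst src
      (set_cv G dst (cv_join (g_cv G dst) (g_cv G src))) true.

(* "for each dst in node.edges: if Merge(dst, node) then add dst to Q" *)
Inductive prop_dsts : mograph -> seq nat -> nat -> seq nat ->
                      mograph -> seq nat -> Prop :=
| pd_nil G node Q : prop_dsts G [::] node Q G Q
| pd_cons G d ds node Q G1 b G' Q' :
    merge G d node G1 b ->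
    prop_dsts G1 ds node (if b then sadd d Q else Q) G' Q' ->
    prop_dsts G (d :: ds) node Q G' Q'.

(* "while Q is nonempty remove a node from Q and ..." *)
Inductive propagate : mograph -> seq nat -> mograph -> Prop :=
| prop_done G : propagate G [::] G
| prop_step G Q x G1 Q1 G' :
    x \in Q ->
    prop_dsts G (g_edges G x) x (sdel x Q) G1 Q1 ->
    propagate G1 Q1 G' ->
    propagate G Q G'.

(* "while from.rmw <> null: next := from.rmw; if next = to stop; else from := next"
   rmw_walk G from to r : the loop ends with from = r. *)
Inductive rmw_walk (G : mograph) : nat -> nat -> nat -> Prop :=
| rw_null x to : g_rmw G x = None -> rmw_walk G x to x
| rw_hit x to : g_rmw G x = Some to -> rmw_walk G x to x
| rw_next x y to r : g_rmw G x = Some y -> y <> to ->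
    rmw_walk G y to r -> rmw_walk G x to r.

Definition must_add (G : mograph) (from to : nat) : Prop :=
  g_rmw G from = Some to \/ g_tid G from = g_tid G to.

Inductive add_edge (G : mograph) (from to : nat) : mograph -> Prop :=
| ae_skip : cv_le (g_cv G from) (g_cv G to) -> ~ must_add G from to ->
    add_edge G from to G
| ae_go f G2 b G' :
    ~ (cv_le (g_cv G from) (g_cv G to) /\ ~ must_add G from to) ->
    rmw_walk G from to f ->
    merge (set_edges G f (sadd to (g_edges G f))) to f G2 b ->
    (if b then propagate G2 [:: to] G' else G' = G2) ->
    add_edge G from to G'.

Definition rmw_prep (G : mograph) (from rmw : nat) : mograph :=
  let G1 := set_rmw G from (Some rmw) in
  let G2 := set_edges G1 rmw
              (foldr sadd (g_edges G1 rmw)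
                 [seq d <- g_edges G1 from | d != rmw]) in
  set_edges G2 from [::].

Definition add_rmw_edge (G : mograph) (from rmw : nat) (G' : mograph) : Prop :=
  add_edge (rmw_prep G from rmw) from rmw G'.

Inductive mo_update (G G' : mograph) : Prop :=
| mu_edge from to : add_edge G from to G' -> mo_update G G'
| mu_rmw from rmw : add_rmw_edge G from rmw G' -> mo_update G G'.

From Pilot Require Import Defs.
From mathcomp Require Import all_boot.
Set Implicit Arguments. Unset Strict Implicit. Unset Printing Implicit Defensive.

(* Merge only raises the clock vector of its destination, and afterwards
   CV_src <= CV_dst.  Hence, throughout the propagation loop, every edge
   a -> c with CV_a <= CV_c keeps that property unless a itself was raised,
   in which case a is queued; processing a queued node merges it into all of
   its successors.  When the queue is empty, every edge that was ordered, or
   whose source was queued, is ordered again.  AddRMWEdge moves the edges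
   from -> c to rmw -> c; the order from -> c is then recovered through
   CV_from <= CV_rmw <= CV_c, with rmw queued by the initial Merge. *)

Lemma cv_le_refl a : cv_le a a.
Proof. by []. Qed.

Lemma cv_le_trans a b c : cv_le a b -> cv_le b c -> cv_le a c.
Proof. by move=> hab hbc t; apply: leq_trans (hab t) (hbc t). Qed.

Lemma mem_sadd x y s : (y \in sadd x s) = (y == x) || (y \in s).
Proof. by rewrite /sadd; case: ifP => [xs|_]; rewrite ?inE //; case: eqP => // ->. Qed.

Lemma mem_foldr_sadd y t s : (y \in foldr sadd t s) = (y \in s) || (y \in t).
Proof. by elim: s => //= x s IH; rewrite mem_sadd IH inE orbA. Qed.

Definition settled (G : mograph) (a c : nat) : Prop := cv_le (g_cv G a) (g_cv G c).

Definition settled_or_pending (G : mograph) (Q : seq nat) (a c : nat) : Prop :=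
  settled G a c \/ a \in Q.

Lemma set_edgesE G x s z :
  g_edges (set_edges G x s) z = if z == x then s else g_edges G z.
Proof. by []. Qed.

Lemma merge_edges G d s G1 b : Defs.merge G d s G1 b -> g_edges G1 = g_edges G.
Proof. by case. Qed.

Lemma merge_false G d s G1 : Defs.merge G d s G1 false -> G1 = G.
Proof. by move=> hm; inversion hm. Qed.

Lemma merge_true_neq G d s G1 : Defs.merge G d s G1 true -> s != d.
Proof. by move=> hm; apply/eqP => esd; inversion hm as [|hsd]; apply: hsd; rewrite esd. Qed.

Lemma merge_settles G d s G1 b : Defs.merge G d s G1 b -> settled G1 s d.
Proof.
case=> // hsd; rewrite /settled /= /upd eqxx.
have /negbTE -> : s != d by apply/eqP => esd; apply: hsd; rewrite esd.
by move=> t; rewrite /cv_join leq_maxr.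
Qed.

Lemma merge_settled_or_pending G d s G1 b Q a c :
  Defs.merge G d s G1 b -> settled_or_pending G Q a c ->
  settled_or_pending G1 (if b then sadd d Q else Q) a c.
Proof.
case=> // _ [hac|aQ]; last by right; rewrite mem_sadd aQ orbT.
have [->|nad] := eqVneq a d; first by right; rewrite mem_sadd eqxx.
left; rewrite /settled /= /upd (negbTE nad).
by apply: cv_le_trans hac _ => t; case: eqP => [->|//]; rewrite /cv_join leq_maxl.
Qed.

Lemma prop_dsts_edges G ds x Q G' Q' :
  prop_dsts G ds x Q G' Q' -> g_edges G' = g_edges G.
Proof. by elim=> // {}G d {}ds {}x {}Q G1 b {}G' {}Q' /merge_edges <-. Qed.

Lemma prop_dsts_settled_or_pending G ds x Q G' Q' a c :
  prop_dsts G ds x Q G' Q' ->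
  settled_or_pending G Q a c \/ (a = x /\ c \in ds) ->
  settled_or_pending G' Q' a c.
Proof.
elim=> [{}G {}x {}Q|{}G d {}ds {}x {}Q G1 b {}G' {}Q' hm _ IH].
  by case=> // -[_]; rewrite in_nil.
case=> [hsp|[ax]]; first by apply: IH; left; apply: merge_settled_or_pending hm hsp.
rewrite inE => /orP[/eqP cd|cds]; last by apply: IH; right.
by apply: IH; left; left; rewrite ax cd; apply: merge_settles hm.
Qed.

Lemma propagate_settles G Q G' a c :
  propagate G Q G' -> c \in g_edges G a -> settled_or_pending G Q a c ->
  settled G' a c.
Proof.
move=> hp; elim: hp a c => [{}G a c _ []//|{}G {}Q x G1 Q1 {}G' _ hpd _ IH a c hac hsp].
apply: IH; first by rewrite (prop_dsts_edges hpd).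
apply: prop_dsts_settled_or_pending hpd _.
case: hsp => [hs|aQ]; first by left; left.
have [<-|nax] := eqVneq a x; first by right.
by left; right; rewrite mem_filter nax.
Qed.

Lemma add_edge_cases G from to G' : add_edge G from to G' ->
  g_cv G' = g_cv G \/
  exists2 f, rmw_walk G from to f &
    exists2 G2, Defs.merge (set_edges G f (sadd to (g_edges G f))) to f G2 true
              & propagate G2 [:: to] G'.
Proof.
case=> [//|f G2 [] G'' _ hw hm hp]; first by left.
  by right; exists f => //; exists G2.
by left; rewrite hp (merge_false hm).
Qed.

Lemma add_edge_settled G from to G' a c :
  add_edge G from to G' -> c \in g_edges G a -> settled G a c -> settled G' a c.
Proof.
move/add_edge_cases => [hcv|[f _ [G2 hm hp]]] hac hs; first by rewrite /settled hcv.
apply: propagate_settles hp _ _.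
  by rewrite (merge_edges hm) set_edgesE; case: eqP => // <-; rewrite mem_sadd hac orbT.
exact: (merge_settled_or_pending (Q := [::]) hm (or_introl hs)).
Qed.

Lemma rmw_walk_hit G x to f : g_rmw G x = Some to -> rmw_walk G x to f -> f = x.
Proof.
move=> hx hw; inversion hw as [| |? y ? ? hy hne] => //.
by move: hy; rewrite hx => -[/esym].
Qed.

Lemma rmw_prep_edgesE G from rmw z :
  g_edges (rmw_prep G from rmw) z =
  if z == from then [::]
  else if z == rmw then
    foldr sadd (g_edges G rmw) [seq d <- g_edges G from | d != rmw]
  else g_edges G z.
Proof. by []. Qed.

Lemma rmw_prep_edges G from rmw a c :
  a != from -> c \in g_edges G a -> c \in g_edges (rmw_prep G from rmw) a.
Proof.
move=> naf hac; rewrite rmw_prep_edgesE (negbTE naf).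
by case: eqP => // <-; rewrite mem_foldr_sadd hac orbT.
Qed.

Lemma rmw_prep_moved G from rmw c :
  from != rmw -> c != rmw -> c \in g_edges G from ->
  c \in g_edges (rmw_prep G from rmw) rmw.
Proof.
move=> nfr ncr hc; rewrite rmw_prep_edgesE eq_sym (negbTE nfr) eqxx.
by rewrite mem_foldr_sadd mem_filter ncr hc.
Qed.

Lemma add_rmw_edge_settled G from rmw G' a c :
  add_rmw_edge G from rmw G' -> c \in g_edges G a -> settled G a c ->
  settled G' a c.
Proof.
rewrite /add_rmw_edge; set P := rmw_prep G from rmw.
move/add_edge_cases => [hcv|[f hw [G2 hm hp]]] hac hs; first by rewrite /settled hcv.
have ef : f = from by apply: rmw_walk_hit hw; rewrite /= /upd eqxx.
subst f.
have nfr : from != rmw := merge_true_neq hm.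
have settles x y : y \in g_edges P x -> x != from ->
    settled_or_pending G2 [:: rmw] x y -> settled G' x y.
  move=> hxy nxf; apply: propagate_settles hp _.
  by rewrite (merge_edges hm) set_edgesE (negbTE nxf).
have [eaf|naf] := eqVneq a from; last first.
  apply: settles (rmw_prep_edges _ naf hac) naf _.
  exact: (merge_settled_or_pending (Q := [::]) hm (or_introl hs)).
subst a.
apply: (@cv_le_trans _ (g_cv G' rmw)).
  apply: propagate_settles hp _ (or_introl (merge_settles hm)).
  by rewrite (merge_edges hm) set_edgesE eqxx mem_sadd eqxx.
have [->|ncr] := eqVneq c rmw; first exact: cv_le_refl.
apply: settles (rmw_prep_moved nfr ncr hac) _ _; first by rewrite eq_sym.
by right; rewrite inE.
Qed.

Lemma mo_update_settled G G' a c :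
  mo_update G G' -> c \in g_edges G a -> settled G a c -> settled G' a c.
Proof. by case=> [from to /add_edge_settled|from rmw /add_rmw_edge_settled]; apply. Qed.

Theorem lemma1 (G G' : mograph) (n : nat) (C : nat -> nat) :
  (forall i, i < n -> C i.+1 \in g_edges G (C i)) ->
  (forall i, i < n -> cv_le (g_cv G (C i)) (g_cv G (C i.+1))) ->
  mo_update G G' ->
  forall i, i < n -> cv_le (g_cv G' (C i)) (g_cv G' (C i.+1)).
Proof.
move=> hpath hcv hU i hi.
exact: mo_update_settled hU (hpath i hi) (hcv i hi).
Qed.
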